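(* Assume the standing hypotheses (H). If $T\subseteq V(G)$ is a stable set with $|T|=3$, then \[\sum_{\{u,v\}\subseteq T,\ u\ne v}|L(u)\cap L(v)|\ \ge\ k.\] Consequently (Corollary 21), every part $A$ of $G$ with $|A|\ge3$ contains distinct $u,v$ with $|L(u)\cap L(v)|\ge k/3$.
   Context: A list assignment $L$ assigns to each vertex $v$ a set $L(v)$ of colors; an $L$-coloring is a proper coloring $f$ with $f(v)\in L(v)$ for all $v$; $\mathrm{ch}$ denotes choice number and $\chi$ chromatic number. A part of a complete multipartite graph is one of its maximal stable sets. Standing hypotheses (H): $k\ge1$ and $n\ge 2k+2$ are integers; $G$ is a complete $k$-partite graph (exactly $k$ nonempty parts) on $n$ vertices; $L$ is a list assignment for $G$ with $|L(v)|\ge\lceil (n+k-1)/3\rceil$ for every vertex $v$; $G$ has no $L$-coloring; $\left|\bigcup_{v\in V(G)}L(v)\right|\le n-1$; and every graph $H$ with fewer than $n$ vertices satisfies $\mathrm{ch}(H)\le\max\{\chi(H),\lceil(|V(H)|+\chi(H)-1)/3\rceil\}$. *)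

From mathcomp Require Import all_boot.
Set Implicit Arguments. Unset Strict Implicit. Unset Printing Implicit Defensive.

Definition ceil3 (x : nat) : nat := (x + 2) %/ 3.

Definition simple_graph (W : finType) (e : rel W) : Prop :=
  symmetric e /\ irreflexive e.

Definition colorable (W : finType) (e : rel W) (c : nat) : Prop :=
  exists f : W -> 'I_c, forall x y, e x y -> f x != f y.

Definition is_chromatic_number (W : finType) (e : rel W) (c : nat) : Prop :=
  colorable e c /\ forall c', colorable e c' -> c <= c'.

Definition L_coloring (W : finType) (e : rel W) (C : finType)
  (L : W -> {set C}) (f : W -> C) : Prop :=
  (forall w, f w \in L w) /\ (forall x y, e x y -> f x != f y).

Definition choosable (W : finType) (e : rel W) (m : nat) : Prop :=
  forall (C : finType) (L : W -> {set C}),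
    (forall w, m <= #|L w|) -> exists f : W -> C, L_coloring e L f.

(* the complete multipartite graph whose parts are the fibres of p *)
Definition multipartite_rel (V : finType) (k : nat) (p : V -> 'I_k) : rel V :=
  fun u v => p u != p v.

From mathcomp Require Import all_boot.
From mathcomp Require Import zify.

Set Implicit Arguments.
Unset Strict Implicit.
Unset Printing Implicit Defensive.

(* For a set T of vertices and a colour c, let holders c be the set of
   vertices of T whose list contains c.  Counting the pairs (v, c) with
   c in L v, the pairs ({u,v}, c) with c in L u and L v, and the colours
   used at all, in terms of m = #|holders c|, and using the elementary
   inequality m <= 'C(m, 2) + [m > 0], we get the Bonferroni-type bound
       sum_{v in T} |L v| <= sum_{pairs P of T} |cap_{x in P} L x| + |U_{v in T} L v|.
   For |T| = 3 the left side is at least 3 * ceil((n+k-1)/3) >= n+k-1 and the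
   union has at most n-1 colours, so the three pairwise intersections add up
   to at least k.  For a part A with
   at least three vertices, apply this to three of them: by averaging one of
   the three pairs has an intersection of size at least k/3 (Corollary 21). *)

Lemma card_as_sum (C : finType) (A : {set C}) : #|A| = \sum_c (c \in A : nat).
Proof. by rewrite -sum1_card big_mkcond; apply: eq_bigr => c _; case: (c \in A). Qed.

Lemma ceil3_ge (x : nat) : x <= 3 * ceil3 x.
Proof. rewrite /ceil3; lia. Qed.

Lemma bigcap_pair (V C : finType) (L : V -> {set C}) (u v : V) :
  u != v -> \bigcap_(x in [set u; v]) L x = L u :&: L v.
Proof. by move=> uv; rewrite big_setU1 ?big_set1 ?inE. Qed.

Lemma exists_term_ge_mean (I : finType) (A : {set I}) (F : I -> nat) (k : nat) :
  0 < k -> k <= \sum_(i in A) F i -> exists2 i, i \in A & k <= #|A| * F i.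
Proof.
move=> k_gt0 k_le_sum; apply/exists_inP; apply: contraT => /exists_inPn small.
have : #|A| * \sum_(i in A) F i <= \sum_(i in A) (k - 1).
  by rewrite big_distrr /=; apply: leq_sum => i /small; rewrite -ltnNge; lia.
rewrite sum_nat_const.
have : 0 < #|A|.
  case: (set_0Vmem A) k_le_sum => [-> | [x xA] _]; first by rewrite big_set0; lia.
  by apply/card_gt0P; exists x.
nia.
Qed.

Section PairCounting.

Variables (V C : finType) (L : V -> {set C}) (T : {set V}).

Definition holders (c : C) : {set V} := [set v in T | c \in L v].

Definition pairs_of : {set {set V}} := [set P : {set V} | P \subset T & #|P| == 2].

Lemma sum_card_lists : \sum_(v in T) #|L v| = \sum_c #|holders c|.
Proof.
under eq_bigr do rewrite card_as_sum.
rewrite exchange_big; apply: eq_bigr => c _.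
rewrite card_as_sum big_mkcond; apply: eq_bigr => v _ /=.
by rewrite inE; case: (v \in T); case: (c \in L v).
Qed.

Lemma mem_bigcap_lists (c : C) (P : {set V}) : P \subset T ->
  (c \in \bigcap_(x in P) L x) = (P \subset holders c).
Proof.
move=> sPT; apply/bigcapP/subsetP => [inL v vP | sub v vP].
- by rewrite inE (subsetP sPT) //= inL.
- by move: (sub v vP); rewrite inE => /andP[].
Qed.

Lemma sum_card_pair_caps :
  \sum_(P in pairs_of) #|\bigcap_(x in P) L x| = \sum_c 'C(#|holders c|, 2).
Proof.
under eq_bigr do rewrite card_as_sum.
rewrite exchange_big; apply: eq_bigr => c _.
have sHT : holders c \subset T by apply/subsetP => v; rewrite inE => /andP[].
rewrite -cards_draws card_as_sum big_mkcond; apply: eq_bigr => P _ /=.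
rewrite !inE; case sPT: (P \subset T) => /=.
  by rewrite mem_bigcap_lists //; case: (P \subset holders c); case: (#|P| == 2).
by case sPH: (P \subset holders c) => //; rewrite (subset_trans sPH sHT) in sPT.
Qed.

Lemma card_bigcup_lists : #|\bigcup_(v in T) L v| = \sum_c (0 < #|holders c|).
Proof.
rewrite card_as_sum; apply: eq_bigr => c _; congr nat_of_bool.
apply/bigcupP/card_gt0P => [[v vT cL] | [v]]; first by exists v; rewrite inE vT.
by rewrite inE => /andP[vT cL]; exists v.
Qed.

(* Bonferroni-type bound: the list sizes are bounded by the pairwise
   intersections plus the number of colours, since m <= 'C(m, 2) + [m > 0]. *)
Lemma sum_lists_le_pairs_union :
  \sum_(v in T) #|L v| <=
  \sum_(P in pairs_of) #|\bigcap_(x in P) L x| + #|\bigcup_(v in T) L v|.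
Proof.
rewrite sum_card_lists sum_card_pair_caps card_bigcup_lists -big_split /=.
by apply: leq_sum => c _; case: #|holders c| => [|[|m]] //=; rewrite bin2 /= uphalfE; nia.
Qed.

Lemma triple_pair_bound (s : nat) : #|T| = 3 -> (forall v, v \in T -> s <= #|L v|) ->
  3 * s <= \sum_(P in pairs_of) #|\bigcap_(x in P) L x| + #|\bigcup_(v in T) L v|.
Proof.
move=> T3 large; apply: leq_trans sum_lists_le_pairs_union.
by rewrite -T3 -sum_nat_const; apply: leq_sum.
Qed.

End PairCounting.

Lemma exists_triple_subset (V : finType) (A : {set V}) :
  3 <= #|A| -> exists2 T : {set V}, T \subset A & #|T| = 3.
Proof.
case/card_gt2P => x [y [z [[xA yA zA] [xy yz zx]]]].
exists [set x; y; z]; first by apply/subsetP => v; rewrite !inE -orbA => /or3P [] /eqP->.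
by rewrite setUC cardsU1 cards2 !inE negb_or xy zx eq_sym yz.
Qed.

Theorem lemma20 (k n : nat) (V : finType) (p : V -> 'I_k)
  (C : finType) (L : V -> {set C}) :
  1 <= k ->
  2 * k + 2 <= n ->
  #|V| = n ->
  (forall i : 'I_k, exists v : V, p v = i) ->
  (forall v : V, ceil3 (n + k - 1) <= #|L v|) ->
  ~ (exists f : V -> C, L_coloring (multipartite_rel p) L f) ->
  #|\bigcup_(v : V) L v| <= n - 1 ->
  (forall (W : finType) (e : rel W), simple_graph e -> #|W| < n ->
     forall c, is_chromatic_number e c ->
       choosable e (maxn c (ceil3 (#|W| + c - 1)))) ->
  (forall T : {set V}, #|T| = 3 ->
     (forall u v, u \in T -> v \in T -> ~~ multipartite_rel p u v) ->
     k <= \sum_(P : {set V} | (P \subset T) && (#|P| == 2))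
            #|\bigcap_(x in P) L x|)
  /\
  (forall i : 'I_k, 3 <= #|[set x | p x == i]| ->
     exists u v : V, [/\ p u = i, p v = i, u != v &
                         k <= 3 * #|L u :&: L v|]).
Proof.
move=> k_gt0 n_large _ _ large_lists _ few_colours _.
have pairs_large (T : {set V}) : #|T| = 3 -> k <= \sum_(P in pairs_of T) #|\bigcap_(x in P) L x|.
  move=> T3; have := triple_pair_bound (s := ceil3 (n + k - 1)) T3 (fun v _ => large_lists v).
  have : #|\bigcup_(v in T) L v| <= #|\bigcup_(v : V) L v|.
    by apply/subset_leq_card/bigcupsP => v _; apply: bigcup_sup.
  (* n >= 1 makes the truncated subtractions n + k - 1 and n - 1 agree *)
  have := ceil3_ge (n + k - 1); lia.
split=> [T T3 _ | i part3].
  by have := pairs_large T T3; under eq_bigl do rewrite inE.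
have [T sTA T3] := exists_triple_subset part3.
have [P] := exists_term_ge_mean k_gt0 (pairs_large T T3).
rewrite cards_draws T3 inE => /andP[sPT /cards2P[u [v [uv defP]]]].
rewrite {}defP bigcap_pair // in sPT * => big_cap.
have inPart w : w \in [set u; v] -> p w = i.
  by move/(subsetP (subset_trans sPT sTA)); rewrite inE => /eqP.
by exists u, v; split; rewrite ?inPart ?set21 ?set22.
Qed.
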